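(* In the setting of the context, $(1-s)^n$ divides $\det(B(t,s))$, i.e. $G(t,s)=\det(B(t,s))/(1-s)^n\in R[t^{\pm1},s^{\pm1}]$.
   Context: Let $\bar L=\bar K\cup\bar A\subset S^3$ be a two-component link (arising as the quotient of a periodic knot $K$ of period $q$ by its periodic symmetry, with $\bar A$ the image of the axis), let $R=\mathbb{Z}$ or $\mathbb{Q}$ and let $\bar\rho\colon\pi_1(S^3-\bar K)\to GL_n(R)$ be a representation. Choose a presentation $\pi_1(S^3-\bar L)=\langle x_1,\dots,x_g\mid r_1,\dots,r_{g-1}\rangle$ coming from a 2-complex homotopy equivalent to the complement, with $x_1$ a meridian of $\bar A$. Let $\Phi$ be the ring homomorphism from $\mathbb{Z}[\pi_1(S^3-\bar L)]$ to $n\times n$ matrices over $R[t^{\pm1},s^{\pm1}]$ sending $h$ to $t^{\mathrm{lk}(h,\bar K)}s^{\mathrm{lk}(h,\bar A)}\bar\rho(h)$ (via $\pi_1(S^3-\bar L)\to\pi_1(S^3-\bar K)$). $B(t,s)$ is the $n(g-1)\times n(g-1)$ matrix obtained from the Fox derivative matrix $(\partial r_i/\partial x_j)_{1\le i\le g-1,\,2\le j\le g}$ by replacing each entry by its image under $\Phi$. *)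

From HB Require Import structures.
From mathcomp Require Import all_boot all_order all_algebra.
From mathcomp Require Import fraction.
Set Implicit Arguments.
Unset Strict Implicit.
Unset Printing Implicit Defensive.
Import Order.TTheory GRing.Theory Num.Theory.
Local Open Scope ring_scope.

(* A letter (k, true) is x_k, a letter (k, false) is x_k^{-1}. *)
Definition letter (g : nat) := ('I_g * bool)%type.
Definition word (g : nat) := seq (letter g).

Definition wsum (g : nat) (l : 'I_g -> int) (w : word g) : int :=
  \sum_(a <- w) (if a.2 then l a.1 else - l a.1).

Definition mxeval (R : comUnitRingType) (g n : nat) (f : 'I_g -> 'M[R]_n)
    (w : word g) : 'M[R]_n :=
  foldr (fun a M => (if a.2 then f a.1 else invmx (f a.1)) *m M) 1%:M w.

(* Elements of the integral group ring Z[F_g] as formal sums of words. *)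
Definition zgroup (g : nat) := seq (int * word g).

(* Fox derivative d w / d x_j in Z[F_g]:
   d(x_k^e w)/dx_j = d(x_k^e)/dx_j + x_k^e dw/dx_j,
   d x_k/dx_j = delta_kj, d x_k^{-1}/dx_j = - delta_kj x_k^{-1}. *)
Fixpoint fox (g : nat) (j : 'I_g) (w : word g) : zgroup g :=
  match w with
  | [::] => [::]
  | a :: w' =>
      (if a.1 == j then
         (if a.2 then [:: (1%Z, [::])] else [:: ((-1)%Z, [:: a])])
       else [::])
      ++ [seq (cu.1, a :: cu.2) | cu <- fox j w']
  end.

Section Laurent.
Variable R : idomainType.

Definition LFrac := {fraction {poly {poly R}}}.
Definition ofpoly (p : {poly {poly R}}) : LFrac := @FracField.tofrac _ p.
Definition tvar : LFrac := ofpoly 'X.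
Definition svar : LFrac := ofpoly ('X%:P).
Definition ofR (c : R) : LFrac := ofpoly (c%:P%:P).

Definition laurent (x : LFrac) : Prop :=
  exists (p : {poly {poly R}}) (a b : nat), x = ofpoly p / (tvar ^+ a * svar ^+ b).

(* Phi(h) = t^{lk(h,K)} s^{lk(h,A)} rho(h) for a word h,
   with lk(.,K) = wsum lK, lk(.,A) = wsum lA, rho given on generators. *)
Definition PhiW (g n : nat) (lK lA : 'I_g -> int) (rho : 'I_g -> 'M[R]_n)
    (h : word g) : 'M[LFrac]_n :=
  (tvar ^ wsum lK h * svar ^ wsum lA h)
    *: mxeval (fun k => map_mx ofR (rho k)) h.

Definition PhiZ (g n : nat) (lK lA : 'I_g -> int) (rho : 'I_g -> 'M[R]_n)
    (x : zgroup g) : 'M[LFrac]_n :=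
  \sum_(cw <- x) (cw.1%:~R *: PhiW lK lA rho cw.2).

(* The matrix B(t,s): generators x_0 (= x_1 of the paper, meridian of A),
   x_{lift ord0 j} for j < g; relators r_i, i < g.  Block (i,j) is
   Phi(d r_i / d x_{j+1}). *)
Definition Bmx (g n : nat) (lK lA : 'I_g.+1 -> int) (rho : 'I_g.+1 -> 'M[R]_n)
    (r : 'I_g -> word g.+1) :=
  \mxblock_(i < g, j < g) PhiZ lK lA rho (fox (lift ord0 j) (r i)).

End Laurent.

From HB Require Import structures.
From mathcomp Require Import all_boot all_order all_algebra.
From mathcomp Require Import fraction perm ring.

Set Implicit Arguments.
Unset Strict Implicit.
Unset Printing Implicit Defensive.
Import GRing.Theory.
Local Open Scope ring_scope.

(* Fox's fundamental formula  sum_j Phi(dr/dx_j) (Phi x_j - 1) = Phi r - 1 = 0  for a relator r,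
   together with Phi x_1 = s, says that B times the block column V = (Phi x_j - 1)_(j >= 2)
   is (1 - s) times the Fox column A of x_1.  For a generator x_k with lk(x_k, K) <> 0, the
   block version of Cramer's rule then gives
     det B * det (Phi x_k - 1) = (1 - s)^n * det E,
   where E, obtained from B by replacing its k-th block column by A, has Laurent entries.
   At s = 1, t = 0 the matrix Phi x_k - 1 becomes -1 or rho x_k, so its determinant is prime
   to 1 - s; as 1 - s is prime in R[t, s], (1 - s)^n divides det B. *)

HB.instance Definition _ (R : idomainType) := GRing.RMorphism.copy (@ofR R)
  ((@FracField.tofrac _ : {poly {poly R}} -> LFrac R) \o polyC \o polyC).

Definition int_pos (z : int) : nat := if z is Posz m then m else 0.
Definition int_neg (z : int) : nat := if z is Negz m then m.+1 else 0.

Lemma expz_pos_neg (K : unitRingType) (x : K) (z : int) :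
  x ^ z = x ^+ int_pos z / x ^+ int_neg z.
Proof. by case: z => m /=; rewrite ?divr1 // NegzE -invr_expz div1r. Qed.

Section LaurentRing.
Variable R : idomainType.
Local Notation PP := {poly {poly R}}.
Local Notation F := (LFrac R).
Local Notation t := (tvar R).
Local Notation s := (svar R).
Local Notation laurent := (@laurent R).

(* [ofpoly] is kept as a plain function: as a morphism instance it makes unification very slow. *)
Lemma ofpoly0 : ofpoly 0 = 0 :> F. Proof. exact: rmorph0. Qed.
Lemma ofpoly1 : ofpoly 1 = 1 :> F. Proof. exact: rmorph1. Qed.
Lemma ofpolyN (p : PP) : ofpoly (- p) = - ofpoly p :> F. Proof. exact: rmorphN. Qed.
Lemma ofpolyD (p q : PP) : ofpoly (p + q) = ofpoly p + ofpoly q :> F. Proof. exact: rmorphD. Qed.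
Lemma ofpolyM (p q : PP) : ofpoly (p * q) = ofpoly p * ofpoly q :> F. Proof. exact: rmorphM. Qed.
Lemma ofpolyXn (p : PP) k : ofpoly (p ^+ k) = ofpoly p ^+ k :> F. Proof. exact: rmorphXn. Qed.
Lemma ofpoly_int (z : int) : ofpoly z%:~R = z%:~R :> F. Proof. exact: rmorph_int. Qed.

Lemma ofpoly_inj : injective (@ofpoly R).
Proof. by move=> p q /eqP; rewrite /ofpoly tofrac_eq => /eqP. Qed.

Lemma ofpoly_eq0 (p : PP) : (ofpoly p == 0) = (p == 0).
Proof. exact: tofrac_eq0. Qed.

Lemma monomialE a b : t ^+ a * s ^+ b = ofpoly ('X ^+ a * 'X%:P ^+ b).
Proof. by rewrite ofpolyM !ofpolyXn. Qed.

Lemma monomial_neq0 a b : t ^+ a * s ^+ b != 0.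
Proof.
by rewrite monomialE ofpoly_eq0 mulf_neq0 // expf_neq0 // ?polyC_eq0 polyX_eq0.
Qed.

Lemma tvar_neq0 : t != 0.
Proof. by have := monomial_neq0 1 0; rewrite expr1 expr0 mulr1. Qed.

Lemma svar_neq0 : s != 0.
Proof. by have := monomial_neq0 0 1; rewrite expr1 expr0 mul1r. Qed.

Lemma laurent_ofpoly (p : PP) : laurent (ofpoly p).
Proof. by exists p, 0%N, 0%N; rewrite !expr0 mulr1 divr1. Qed.

Lemma laurent0 : laurent 0. Proof. by rewrite -ofpoly0; apply: laurent_ofpoly. Qed.
Lemma laurent1 : laurent 1. Proof. by rewrite -ofpoly1; apply: laurent_ofpoly. Qed.

Lemma laurent_int (z : int) : laurent z%:~R.
Proof. by rewrite -ofpoly_int; apply: laurent_ofpoly. Qed.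

Lemma laurent_ofR c : laurent (ofR c).
Proof. exact: laurent_ofpoly. Qed.

Lemma laurentM x y : laurent x -> laurent y -> laurent (x * y).
Proof.
move=> [p [a [b ->]]] [q [c [d ->]]]; exists (p * q), (a + c)%N, (b + d)%N.
by rewrite mulf_div ofpolyM mulrACA -!exprD.
Qed.

Lemma laurentD x y : laurent x -> laurent y -> laurent (x + y).
Proof.
move=> [p [a [b ->]]] [q [c [d ->]]].
exists (p * ('X ^+ c * 'X%:P ^+ d) + q * ('X ^+ a * 'X%:P ^+ b)), (a + c)%N, (b + d)%N.
by rewrite addf_div ?monomial_neq0 // ofpolyD !ofpolyM !ofpolyXn !exprD mulrACA.
Qed.

Lemma laurentN x : laurent x -> laurent (- x).
Proof. by move=> [p [a [b ->]]]; exists (- p), a, b; rewrite ofpolyN mulNr. Qed.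

Lemma laurent_sum (I : Type) (r : seq I) (P : pred I) (f : I -> F) :
  (forall i, P i -> laurent (f i)) -> laurent (\sum_(i <- r | P i) f i).
Proof. by move=> lf; apply: big_ind => //; [apply: laurent0 | apply: laurentD]. Qed.

Lemma laurent_prod (I : Type) (r : seq I) (P : pred I) (f : I -> F) :
  (forall i, P i -> laurent (f i)) -> laurent (\prod_(i <- r | P i) f i).
Proof. by move=> lf; apply: big_ind => //; [apply: laurent1 | apply: laurentM]. Qed.

Lemma laurent_monomialV a b : laurent (t ^+ a * s ^+ b)^-1.
Proof. by exists 1, a, b; rewrite ofpoly1 div1r. Qed.

Lemma laurent_monomial_expz (a b : int) : laurent (t ^ a * s ^ b).
Proof.
rewrite !expz_pos_neg mulf_div [X in X / _]monomialE.
by apply: laurentM; [apply: laurent_ofpoly | apply: laurent_monomialV].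
Qed.

Lemma laurent_det m (M : 'M[F]_m) : (forall i j, laurent (M i j)) -> laurent (\det M).
Proof.
move=> lM; apply: laurent_sum => sigma _; apply: laurentM; last exact: laurent_prod.
by case: (odd_perm sigma); [apply/laurentN/laurent1 | apply: laurent1].
Qed.

Definition laurent_mx m k (M : 'M[F]_(m, k)) := forall i j, laurent (M i j).

Lemma laurent_mxD m k (A B : 'M[F]_(m, k)) :
  laurent_mx A -> laurent_mx B -> laurent_mx (A + B).
Proof. by move=> lA lB i j; rewrite mxE; apply: laurentD. Qed.

Lemma laurent_mxN m k (A : 'M[F]_(m, k)) : laurent_mx A -> laurent_mx (- A).
Proof. by move=> lA i j; rewrite mxE; apply: laurentN. Qed.

Lemma laurent_mxM m k l (A : 'M[F]_(m, k)) (B : 'M[F]_(k, l)) :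
  laurent_mx A -> laurent_mx B -> laurent_mx (A *m B).
Proof. by move=> lA lB i j; rewrite mxE; apply: laurent_sum => q _; apply: laurentM. Qed.

Lemma laurent_mx_scalar m c : laurent c -> laurent_mx (c%:M : 'M[F]_m).
Proof.
by move=> lc i j; rewrite mxE; case: (i == j); rewrite ?mulr1n ?mulr0n //; apply: laurent0.
Qed.

Lemma laurent_mxblock p q (p_ : 'I_p -> nat) (q_ : 'I_q -> nat)
    (B_ : forall i j, 'M[F]_(p_ i, q_ j)) :
  (forall i j, laurent_mx (B_ i j)) -> laurent_mx (\mxblock_(i, j) B_ i j).
Proof. by move=> lB i j; rewrite mxE; apply: lB. Qed.

Lemma laurent_mxrow m q (q_ : 'I_q -> nat) (B_ : forall j, 'M[F]_(m, q_ j)) :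
  (forall j, laurent_mx (B_ j)) -> laurent_mx (\mxrow_j B_ j).
Proof. by move=> lB i j; rewrite mxE; apply: lB. Qed.

Lemma laurent_mxcol k p (p_ : 'I_p -> nat) (B_ : forall i, 'M[F]_(p_ i, k)) :
  (forall i, laurent_mx (B_ i)) -> laurent_mx (\mxcol_i B_ i).
Proof. by move=> lB i j; rewrite mxE; apply: lB. Qed.

End LaurentRing.

Section FoxCalculus.
Variables (R : idomainType) (g n : nat) (lK lA : 'I_g -> int) (rho : 'I_g -> 'M[R]_n).
Hypothesis rho_unit : forall k, rho k \in unitmx.
Local Notation Phi := (PhiW lK lA rho).
Local Notation PhiZ := (PhiZ lK lA rho).

Lemma wsum_nil (l : 'I_g -> int) : wsum l [::] = 0.
Proof. by rewrite /wsum big_nil. Qed.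

Lemma wsum_cons (l : 'I_g -> int) a w :
  wsum l (a :: w) = (if a.2 then l a.1 else - l a.1) + wsum l w.
Proof. by rewrite /wsum big_cons. Qed.

Lemma wsum_eq0 (l : 'I_g -> int) w : (forall k, l k = 0) -> wsum l w = 0.
Proof. by move=> l0; rewrite /wsum big1 // => a _; rewrite l0 oppr0 if_same. Qed.

Lemma ofR_unitmx (M : 'M[R]_n) : M \in unitmx -> map_mx (@ofR R) M \in unitmx.
Proof. by rewrite !unitmxE det_map_mx; apply: rmorph_unit. Qed.

Lemma map_ofR_invmx (M : 'M[R]_n) :
  M \in unitmx -> map_mx (@ofR R) (invmx M) = invmx (map_mx (@ofR R) M).
Proof.
move=> uM; rewrite -[LHS]mul1mx -(mulVmx (ofR_unitmx uM)) -mulmxA -map_mxM.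
by rewrite mulmxV // map_mx1 mulmx1.
Qed.

Lemma mxeval_map_ofR w :
  mxeval (fun k => map_mx (@ofR R) (rho k)) w = map_mx (@ofR R) (mxeval rho w).
Proof.
elim: w => [|[k e] w IHw] /=; first by rewrite map_mx1.
by rewrite IHw map_mxM; case: e; rewrite ?map_ofR_invmx.
Qed.

Lemma PhiW_nil : Phi [::] = 1%:M.
Proof. by rewrite /PhiW !wsum_nil mulr1 scale1r. Qed.

Lemma PhiW_cons a w : Phi (a :: w) = Phi [:: a] *m Phi w.
Proof.
rewrite /PhiW !wsum_cons !wsum_nil !addr0.
rewrite !expfzDr ?tvar_neq0 ?svar_neq0 // -scalemxAl -scalemxAr scalerA /=.
by rewrite mulmx1 mulrACA.
Qed.

Lemma PhiW_generator k :
  Phi [:: (k, true)] = (tvar R ^ lK k * svar R ^ lA k) *: map_mx (@ofR R) (rho k).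
Proof. by rewrite /PhiW !wsum_cons !wsum_nil !addr0 /= mulmx1. Qed.

Lemma PhiW_rel w :
  wsum lK w = 0 -> wsum lA w = 0 -> mxeval rho w = 1%:M -> Phi w = 1%:M.
Proof.
by move=> wK wA w1; rewrite /PhiW wK wA mxeval_map_ofR w1 map_mx1 mulr1 scale1r.
Qed.

Lemma PhiW_inv_generator k : Phi [:: (k, false)] *m Phi [:: (k, true)] = 1%:M.
Proof.
rewrite -PhiW_cons PhiW_rel ?wsum_cons ?wsum_nil ?addr0 ?addNr //=.
by rewrite mulmx1 mulVmx.
Qed.

Lemma PhiZ_nil : PhiZ [::] = 0.
Proof. by rewrite /PhiZ big_nil. Qed.

Lemma PhiZ_cat x y : PhiZ (x ++ y) = PhiZ x + PhiZ y.
Proof. by rewrite /PhiZ big_cat. Qed.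

Lemma PhiZ_map_cons a x :
  PhiZ [seq (cu.1, a :: cu.2) | cu <- x] = Phi [:: a] *m PhiZ x.
Proof.
rewrite /PhiZ big_map mulmx_sumr; apply: eq_bigr => cu _.
by rewrite /= PhiW_cons scalemxAr.
Qed.

Lemma fox_fundamental w :
  \sum_(j < g) PhiZ (fox j w) *m (Phi [:: (j, true)] - 1%:M) = Phi w - 1%:M.
Proof.
elim: w => [|a w IHw].
  by rewrite PhiW_nil subrr big1 // => j _; rewrite PhiZ_nil mul0mx.
under eq_bigr do rewrite /= PhiZ_cat PhiZ_map_cons mulmxDl -mulmxA.
rewrite big_split /= -mulmx_sumr IHw (bigD1 a.1) //= eqxx big1 => [|j /negbTE ja1].
  rewrite addr0 [Phi (a :: w)]PhiW_cons /PhiZ; case: a => k [];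
    rewrite big_seq1 /= ?PhiW_nil ?scaleN1r ?scale1r ?mul1mx ?mulNmx mulmxBr mulmx1.
    by rewrite addrC addrA subrK.
  by rewrite PhiW_inv_generator mulmxBr mulmx1 opprB addrC addrA subrK.
by rewrite eq_sym ja1 PhiZ_nil mul0mx.
Qed.

Lemma laurent_mx_PhiW w : laurent_mx (Phi w).
Proof.
move=> i j; rewrite /PhiW mxeval_map_ofR !mxE.
by apply: laurentM; [apply: laurent_monomial_expz | apply: laurent_ofR].
Qed.

Lemma laurent_mx_PhiZ x : laurent_mx (PhiZ x).
Proof.
move=> i j; rewrite /PhiZ summxE; apply: laurent_sum => cw _.
by rewrite mxE; apply: laurentM; [apply: laurent_int | apply: laurent_mx_PhiW].
Qed.

End FoxCalculus.

Section BlockCramer.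
Variable K : comNzRingType.

Lemma det_1_plus_mulmx m k (A : 'M[K]_(m, k)) (B : 'M[K]_(k, m)) :
  \det (1%:M + A *m B) = \det (1%:M + B *m A).
Proof.
have lower : block_mx 1%:M 0 B 1%:M *m block_mx 1%:M (- A) 0 (1%:M + B *m A)
    = block_mx 1%:M (- A) B 1%:M.
  by rewrite mulmx_block ?mul1mx ?mul0mx ?mulmx0 ?mulmx1 ?addr0 ?add0r mulmxN addrA
    addrAC addNr add0r.
have upper : block_mx (1%:M + A *m B) (- A) 0 1%:M *m block_mx 1%:M 0 B 1%:M
    = block_mx 1%:M (- A) B 1%:M.
  by rewrite mulmx_block ?mul1mx ?mul0mx ?mulmx0 ?mulmx1 ?addr0 ?add0r mulNmx addrK.
transitivity (\det (block_mx 1%:M (- A) B 1%:M : 'M[K]_(m + k))).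
  by rewrite -upper det_mulmx det_ublock det_lblock !det1 !mulr1.
by rewrite -lower det_mulmx det_lblock det_ublock !det1 !mul1r.
Qed.

(* With N = 1, L = e_k^T and U = e_k this is Cramer's rule: B v = c a forces
   det B * v_k = c * det (B with its k-th column replaced by a). *)
Lemma det_cramer_block N n (B : 'M[K]_N) (L : 'M[K]_(n, N)) (U V A : 'M[K]_(N, n)) c :
  L *m U = 1%:M -> B *m V = A *m c%:M ->
  \det B * \det (L *m V) = c ^+ n * \det (B - B *m U *m L + A *m L).
Proof.
move=> LU1 BVA; set E := B - B *m U *m L + A *m L.
have EUA : E *m U = A.
  by rewrite /E !mulmxDl mulNmx -!mulmxA LU1 !mulmx1 subrr add0r.
have detLV : \det (1%:M + (V - U) *m L) = \det (L *m V).
  by rewrite det_1_plus_mulmx mulmxBr LU1 addrC subrK.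
have detc : \det (1%:M + U *m ((c - 1) *: L)) = c ^+ n.
  by rewrite det_1_plus_mulmx -scalemxAl LU1 -{1}(scale1r 1%:M) -scalerDl addrC subrK
    scalemx1 det_scalar.
rewrite -detLV -detc [RHS]mulrC -!det_mulmx; congr (\det _).
rewrite mulmxDr mulmx1 mulmxBl mulmxBr !mulmxA BVA mul_mx_scalar -scalemxAl.
rewrite mulmxDr mulmx1 -!scalemxAr mulmxA EUA scalerBl scale1r /E.
by rewrite addrCA [RHS]addrC [_ + A *m L]addrC subrKA.
Qed.

End BlockCramer.

Section OneMinusS.
Variable R : idomainType.
Local Notation PP := {poly {poly R}}.
Local Notation F := (LFrac R).
Local Notation t := (tvar R).
Local Notation s := (svar R).

(* In [PP] the outer variable is t and the inner one is s, so evaluating the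
   coefficients at 1 sets s = 1; [onems] is 1 - s. *)
Local Notation eval_s1 := (map_poly (horner_eval (1 : R))).
Local Notation onems := ((1 - 'X)%:P : PP).
Local Notation tofrac := (@FracField.tofrac _ : PP -> F).

Lemma ofpoly_onems : ofpoly onems = 1 - s.
Proof. by rewrite polyCB ofpolyD ofpolyN ofpoly1. Qed.

Lemma eval_s1_monomial a b : eval_s1 ('X ^+ a * 'X%:P ^+ b) = 'X ^+ a.
Proof.
by rewrite rmorphM /= map_polyXn -rmorphXn /= map_polyC /= horner_evalE hornerXn
  expr1n polyC1 mulr1.
Qed.

Lemma eval_s1_eq0 (P : PP) : eval_s1 P = 0 -> exists P1, P = onems * P1.
Proof.
move=> P_s1; exists (\poly_(i < size P) - (P`_i %/ ('X - 1%:P))).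
apply/polyP => i; rewrite mul_polyC coefZ coef_poly.
case: ltnP => [_|/(nth_default 0) ->]; last by rewrite mulr0.
have root1 : ('X - 1%:P) %| P`_i.
  rewrite dvdp_XsubCl; apply/eqP.
  by have := congr1 (coefp i) P_s1; rewrite /= coef_map coef0.
rewrite mulrN -mulNr opprB mulrC Pdiv.IdomainUnit.divpK // lead_coefXsubC.
exact: unitr1.
Qed.

Lemma onems_expn_cancel n (P W Y : PP) :
  onems ^+ n * Y = P * W -> eval_s1 W != 0 -> exists P1, P = onems ^+ n * P1.
Proof.
elim: n P => [|n IHn] P eqPW W_s1; first by exists P; rewrite mul1r.
have /eval_s1_eq0 [P1 P_eq] : eval_s1 P = 0.
  apply/eqP; rewrite -(mulIr_eq0 _ (mulIf W_s1)) -rmorphM -eqPW rmorphM rmorphXn.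
  by rewrite /= map_polyC /= horner_evalE !hornerE subrr expr0n mul0r.
have onems_neq0 : onems != 0 by rewrite polyC_eq0 -opprB oppr_eq0 polyXsubC_eq0.
move: eqPW; rewrite P_eq exprS -!mulrA => /(mulfI onems_neq0) /IHn /(_ W_s1) [P2 ->].
by exists P2; rewrite mulrA.
Qed.

(* x = N / D with N not divisible by 1 - s. *)
Definition prime_to_onems (x : F) :=
  exists N D : PP, [/\ D != 0, x * ofpoly D = ofpoly N & eval_s1 N != 0].

Lemma laurent_onems_cancel n (D h E : F) :
  laurent D -> laurent E -> prime_to_onems h -> D * h = (1 - s) ^+ n * E ->
  exists G, laurent G /\ D = (1 - s) ^+ n * G.
Proof.
move=> [P [a [b ->]]] [Q [c [d ->]]] [N [Dh [Dh_neq0 hDh N_s1]]] eqDE.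
have mab := monomial_neq0 R a b; have mcd := monomial_neq0 R c d.
have : ofpoly P * ofpoly N * (t ^+ c * s ^+ d)
    = (1 - s) ^+ n * ofpoly Q * (t ^+ a * s ^+ b) * ofpoly Dh.
  rewrite -hDh -[ofpoly P](divfK mab) -[ofpoly Q](divfK mcd).
  move: eqDE; set m1 := t ^+ a * _; set m2 := t ^+ c * _; set k := (1 - s) ^+ n.
  set u := ofpoly P / _; set v := ofpoly Q / _ => eqDE.
  transitivity (u * h * m1 * ofpoly Dh * m2); first by ring.
  by rewrite eqDE; ring.
rewrite !monomialE -ofpoly_onems -ofpolyXn -!ofpolyM -!mulrA => /ofpoly_inj eqPN.
have W_s1 : eval_s1 (N * ('X ^+ c * 'X%:P ^+ d)) != 0.
  by rewrite rmorphM /= eval_s1_monomial mulf_neq0 // expf_neq0 // polyX_eq0.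
have [P1 ->] := onems_expn_cancel (esym eqPN) W_s1.
exists (ofpoly P1 / (t ^+ a * s ^+ b)); split; first by exists P1, a, b.
by rewrite ofpolyM ofpolyXn ofpoly_onems mulrA monomialE.
Qed.

Local Notation eval_s1_t0 := (horner_eval 0 \o map_poly (horner_eval (1 : R))).

Lemma prime_to_onems_det_frac m (alpha beta : PP) (M : 'M[R]_m) :
  beta != 0 -> \det (eval_s1_t0 alpha *: M - (eval_s1_t0 beta)%:M) != 0 ->
  prime_to_onems (\det ((ofpoly alpha / ofpoly beta) *: map_mx (@ofR R) M - 1%:M)).
Proof.
move=> beta_neq0 detM_neq0.
pose Mp : 'M[PP]_m := map_mx (fun c => c%:P%:P) M.
pose Np := alpha *: Mp - beta%:M.
have ofbeta_neq0 : ofpoly beta != 0 :> F by rewrite ofpoly_eq0.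
exists (\det Np), (beta ^+ m); split; first exact: expf_neq0.
  have -> : (ofpoly alpha / ofpoly beta) *: map_mx (@ofR R) M - 1%:M
      = (ofpoly beta)^-1 *: map_mx tofrac Np.
    rewrite map_mxB map_mxZ map_scalar_mx scalerBr scalerA scale_scalar_mx mulVf //.
    by rewrite mulrC -map_mx_comp.
  by rewrite detZ det_map_mx ofpolyXn mulrAC -exprMn mulVf // expr1n mul1r.
have Mp_s1_t0 : map_mx eval_s1_t0 Mp = M.
  by apply/matrixP => i j; rewrite !mxE /= map_polyC /= !horner_evalE !hornerC.
apply: contra detM_neq0 => /eqP Np_s1.
rewrite -Mp_s1_t0 -map_scalar_mx -map_mxZ -map_mxB det_map_mx /= Np_s1.
by rewrite horner_evalE horner0.
Qed.

Lemma prime_to_onems_det_monomial m (M : 'M[R]_m) (a b : int) :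
  M \in unitmx -> a != 0 ->
  prime_to_onems (\det ((t ^ a * s ^ b) *: map_mx (@ofR R) M - 1%:M)).
Proof.
move=> M_unit a_neq0; rewrite !expz_pos_neg mulf_div !monomialE.
apply: prime_to_onems_det_frac.
  by rewrite mulf_neq0 // expf_neq0 // ?polyC_eq0 polyX_eq0.
rewrite /= !eval_s1_monomial !horner_evalE !hornerXn.
case: a a_neq0 => [[|k]|k] //= _; rewrite ?expr0n ?expr0 /=.
  by rewrite scale0r sub0r -scaleN1r detZ det1 mulr1 expf_neq0 // oppr_eq0 oner_eq0.
rewrite scale1r (raddf0 (@scalar_mx R m)) subr0.
by apply: contraTneq M_unit => detM0; rewrite unitmxE detM0 unitr0.
Qed.

End OneMinusS.

Lemma mxrow_delta_mulmx (K : pzRingType) g n m (k : 'I_g) (B_ : 'I_g -> 'M[K]_(n, m)) :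
  \mxrow_(j < g) (if j == k then 1%:M else 0 : 'M[K]_n) *m \mxcol_j B_ j = B_ k.
Proof.
rewrite mul_mxrow_mxcol (bigD1 k) //= eqxx mul1mx big1 ?addr0 // => j /negbTE ->.
exact: mul0mx.
Qed.

Lemma exists_lift_neq0 g (l : 'I_g.+1 -> int) w :
  l ord0 = 0 -> wsum l w != 0 -> exists k, l (lift ord0 k) != 0.
Proof.
move=> l0 lw_neq0; apply/existsP; apply: contraNT lw_neq0 => /existsPn l_lift0.
apply/eqP/wsum_eq0 => i; case: (unliftP ord0 i) => [j ->|->] //.
by apply/eqP; rewrite -[_ == 0]negbK l_lift0.
Qed.

Section AlexanderMatrix.
Variables (R : idomainType) (g n : nat) (r : 'I_g -> word g.+1).
Variables (lK lA : 'I_g.+1 -> int) (rho : 'I_g.+1 -> 'M[R]_n).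
Hypotheses (lK_rel : forall i, wsum lK (r i) = 0) (lA_rel : forall i, wsum lA (r i) = 0).
Hypotheses (rho_unit : forall k, rho k \in unitmx) (rho_rel : forall i, mxeval rho (r i) = 1%:M).
Hypotheses (lK_x1 : lK ord0 = 0) (lA_x1 : lA ord0 = 1) (rho_x1 : rho ord0 = 1%:M).
Local Notation Phi := (PhiW lK lA rho).

Lemma Bmx_mul_generators :
  Bmx lK lA rho r *m \mxcol_(j < g) (Phi [:: (lift ord0 j, true)] - 1%:M)
  = \mxcol_(i < g) PhiZ lK lA rho (fox ord0 (r i)) *m (1 - svar R)%:M.
Proof.
rewrite mul_mxblock_mxrow mxcol_mul; apply: eq_mxcol => i.
have := fox_fundamental lK lA rho_unit (r i).
rewrite big_ord_recl (PhiW_rel rho_unit (lK_rel i) (lA_rel i) (rho_rel i)) subrr.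
rewrite PhiW_generator lK_x1 lA_x1 rho_x1 map_mx1.
rewrite expr0z expr1z mul1r scalemx1 => /eqP; rewrite addrC addr_eq0 => /eqP ->.
by rewrite -mulmxN opprB (raddfB (@scalar_mx _ n)).
Qed.

End AlexanderMatrix.

Theorem lemma6p2 (R : idomainType) (g n : nat)
    (r : 'I_g -> word g.+1)
    (lK lA : 'I_g.+1 -> int)
    (rho : 'I_g.+1 -> 'M[R]_n)
    (* lk(.,K) and lk(.,A) are homomorphisms on pi_1 = <x | r> *)
    (hK_rel : forall i, wsum lK (r i) = 0)
    (hA_rel : forall i, wsum lA (r i) = 0)
    (* rho takes values in GL_n(R) and is a homomorphism on pi_1 *)
    (hrho_unit : forall k, rho k \in unitmx)
    (hrho_rel : forall i, mxeval rho (r i) = 1%:M)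
    (* x_1 is a meridian of A: lk(x_1,K) = 0, lk(x_1,A) = 1 and x_1 dies
       in pi_1(S^3 - K), so rho (which factors through it) kills x_1 *)
    (hK_x1 : lK ord0 = 0) (hA_x1 : lA ord0 = 1)
    (hrho_x1 : rho ord0 = 1%:M)
    (* a meridian of K exists: lk(m,K) = 1, lk(m,A) = 0 *)
    (hmer : exists w : word g.+1, wsum lK w = 1 /\ wsum lA w = 0) :
  exists G : LFrac R, laurent G /\
    \det (Bmx lK lA rho r) = (1 - svar R) ^+ n * G.
Proof.
have [k lKk_neq0] : exists k, lK (lift ord0 k) != 0.
  by have [w [wK1 _]] := hmer; apply: (exists_lift_neq0 hK_x1 (w := w)); rewrite wK1.
pose E_ (j : 'I_g) : 'M[LFrac R]_n := if j == k then 1%:M else 0.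
have lE : forall j, laurent_mx (E_ j).
  move=> j; rewrite /E_; case: (j == k); first exact/laurent_mx_scalar/laurent1.
  by move=> i' j'; rewrite mxE; apply: laurent0.
have LU1 : \mxrow_j E_ j *m \mxcol_j E_ j = 1%:M.
  by rewrite mxrow_delta_mulmx /E_ eqxx.
have lPhiZ x : laurent_mx (PhiZ lK lA rho x) := laurent_mx_PhiZ lK lA hrho_unit x.
have lB : laurent_mx (Bmx lK lA rho r) := laurent_mxblock (fun i j => lPhiZ _).
have lA0 := laurent_mxcol (fun i : 'I_g => lPhiZ (fox ord0 (r i))).
have lL := laurent_mxrow lE; have lU := laurent_mxcol lE.
have := det_cramer_block LU1
  (Bmx_mul_generators hK_rel hA_rel hrho_unit hrho_rel hK_x1 hA_x1 hrho_x1).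
rewrite mxrow_delta_mulmx PhiW_generator => /laurent_onems_cancel; apply.
- exact: laurent_det lB.
- apply: laurent_det.
  exact: laurent_mxD (laurent_mxD lB (laurent_mxN (laurent_mxM (laurent_mxM lB lU) lL)))
                     (laurent_mxM lA0 lL).
- exact: prime_to_onems_det_monomial.
Qed.
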